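(* Let $\mathbf{X}_1,\dots,\mathbf{X}_T\in\mathbb{R}^{d\times\ell}$, $\mathbf{Z}_1,\dots,\mathbf{Z}_T\in\mathbb{R}^{2k\times k}$ with $2k\le d$, and let $L(\mathbf{Q})=-\sum_{i=1}^T\|\mathbf{X}_i^\top\mathbf{Q}\mathbf{Z}_i\|_F^2$ for $\mathbf{Q}\in\mathbb{R}^{d\times 2k}$. Given $\mathbf{Q}'\in\mathrm{St}(d,2k)$, let $\mathbf{R}=\sum_{i=1}^T\mathbf{X}_i\mathbf{X}_i^\top\mathbf{Q}'\mathbf{Z}_i\mathbf{Z}_i^\top$ with thin SVD $\mathbf{R}=\mathbf{W}\boldsymbol{\Sigma}\mathbf{V}^\top$, and set $\hat{\mathbf{Q}}=\mathbf{W}\mathbf{V}^\top$. Then $\hat{\mathbf{Q}}\in\arg\min_{\mathbf{Q}\in\mathrm{St}(d,2k)}\|\mathbf{Q}-\mathbf{R}\|_F^2$ and $L(\hat{\mathbf{Q}})\le L(\mathbf{Q}')$. In particular, with $\mathbf{Z}_i=[\cos(\boldsymbol{\Theta}t_i);\sin(\boldsymbol{\Theta}t_i)]$ and $\mathbf{Q}=[\mathbf{H}\ \mathbf{Y}]$, one has $\mathbf{R}=\sum_i[\mathbf{X}_i\mathbf{G}_i^\top\cos(\boldsymbol{\Theta}t_i)\ \ \mathbf{X}_i\mathbf{G}_i^\top\sin(\boldsymbol{\Theta}t_i)]$ with $\mathbf{G}_i=(\mathbf{Q}'\mathbf{Z}_i)^\top\mathbf{X}_i$, and the update does not increase the loss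 $-\sum_i\|\mathbf{X}_i^\top(\mathbf{H}\cos(\boldsymbol{\Theta}t_i)+\mathbf{Y}\sin(\boldsymbol{\Theta}t_i))\|_F^2$ for fixed $\boldsymbol{\Theta}$.
   Context: $\mathrm{St}(d,p)=\{\mathbf{Q}\in\mathbb{R}^{d\times p}:\mathbf{Q}^\top\mathbf{Q}=\mathbf{I}_p\}$ (Stiefel manifold). $\boldsymbol{\Theta}$ is a real diagonal $k\times k$ matrix, $t_i\in\mathbb{R}$, and $[\cdot;\cdot]$ denotes vertical stacking. *)

From HB Require Import structures.
From mathcomp Require Import all_boot all_order all_algebra.
From mathcomp Require Import all_classical all_reals all_analysis.
Set Implicit Arguments. Unset Strict Implicit. Unset Printing Implicit Defensive.
Import Order.TTheory GRing.Theory Num.Theory.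
Local Open Scope ring_scope.

Definition frob2 (R : realType) (m n : nat) (A : 'M[R]_(m, n)) : R :=
  \sum_(i < m) \sum_(j < n) (A i j) ^+ 2.

Definition stiefel (R : realType) (d p : nat) (Q : 'M[R]_(d, p)) : Prop :=
  Q^T *m Q = 1%:M.

Definition thin_svd (R : realType) (d p : nat) (A : 'M[R]_(d, p))
    (W : 'M[R]_(d, p)) (S : 'M[R]_p) (V : 'M[R]_p) : Prop :=
  [/\ A = W *m S *m V^T, stiefel W, stiefel V,
      is_diag_mx S &
      (forall i : 'I_p, 0 <= S i i)] /\
      (forall i j : 'I_p, (i <= j)%N -> S j j <= S i i).

Definition lossL (R : realType) (d l p k T : nat)
    (X : 'I_T -> 'M[R]_(d, l)) (Z : 'I_T -> 'M[R]_(p, k))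
    (Q : 'M[R]_(d, p)) : R :=
  - \sum_(i < T) frob2 ((X i)^T *m Q *m Z i).

Definition Rmat (R : realType) (d l p k T : nat)
    (X : 'I_T -> 'M[R]_(d, l)) (Z : 'I_T -> 'M[R]_(p, k))
    (Q' : 'M[R]_(d, p)) : 'M[R]_(d, p) :=
  \sum_(i < T) (X i *m (X i)^T *m Q' *m Z i *m (Z i)^T).

Definition cosTheta (R : realType) (k : nat) (theta : 'I_k -> R) (t : R) : 'M[R]_k :=
  diag_mx (\row_j cos (theta j * t)).
Definition sinTheta (R : realType) (k : nat) (theta : 'I_k -> R) (t : R) : 'M[R]_k :=
  diag_mx (\row_j sin (theta j * t)).

Definition lossHY (R : realType) (d l k T : nat)
    (X : 'I_T -> 'M[R]_(d, l)) (theta : 'I_k -> R) (t : 'I_T -> R)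
    (H Y : 'M[R]_(d, k)) : R :=
  - \sum_(i < T) frob2 ((X i)^T *m (H *m cosTheta theta (t i) + Y *m sinTheta theta (t i))).

From mathcomp Require Import all_boot all_order all_algebra.
From mathcomp Require Import all_classical all_reals all_analysis.
From mathcomp Require Import lra.
Set Implicit Arguments. Unset Strict Implicit. Unset Printing Implicit Defensive.
Import Order.TTheory GRing.Theory Num.Theory.
Local Open Scope ring_scope.

(* Write <A, B> = tr(A^T B), so that frob2 A = <A, A>.
   1. SVD trace bound: if M = W S V^T is a thin SVD then for every Stiefel Q,
      <Q, M> = tr((Q V)^T W S) <= tr S, because
      0 <= tr((QV - W)^T (QV - W) S) = 2 tr S - 2 tr((QV)^T W S); equality
      holds for the polar factor Q = W V^T, which is itself Stiefel.
   2. Procrustes: on the Stiefel manifold frob2 (Q - M) = p - 2 <Q, M> + frob2 M,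
      so maximizing <Q, M> is minimizing the distance to M; hence W V^T is a
      nearest Stiefel matrix to M.
   3. Majorization: Q |-> sum_i frob2 (X_i^T Q Z_i) is a convex quadratic whose
      gradient at Q' is 2 R with R = Rmat X Z Q', so
      L(Q) <= L(Q') - 2 <Q - Q', R>.  Taking Q = W V^T and applying step 1 to
      Q' gives L(W V^T) <= L(Q').
   4. With Z_i = [cos(Theta t_i); sin(Theta t_i)] and Q = [H Y], Q Z_i is
      H cos + Y sin, so lossHY is lossL, and R takes the announced block form. *)

Section FrobeniusTrace.
Variable R : realType.

Lemma frob2_tr m n (A : 'M[R]_(m, n)) : frob2 A = \tr (A^T *m A).
Proof.
rewrite /frob2 /mxtrace exchange_big /=; apply: eq_bigr => j _.
by rewrite mxE; apply: eq_bigr => i _; rewrite !mxE expr2.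
Qed.

Lemma frob2_ge0 m n (A : 'M[R]_(m, n)) : 0 <= frob2 A.
Proof. by apply: sumr_ge0 => i _; apply: sumr_ge0 => j _; exact: sqr_ge0. Qed.

Lemma mxtrace_inner_sym m n (A B : 'M[R]_(m, n)) :
  \tr (B^T *m A) = \tr (A^T *m B).
Proof. by rewrite -mxtrace_tr trmx_mul trmxK. Qed.

Lemma frob2D m n (A B : 'M[R]_(m, n)) :
  frob2 (A + B) = frob2 A + 2 * \tr (A^T *m B) + frob2 B.
Proof.
rewrite !frob2_tr (raddfD (@trmx R m n)) mulmxDr !mulmxDl !mxtraceD (mxtrace_inner_sym A B).
lra.
Qed.

Lemma frob2B m n (A B : 'M[R]_(m, n)) :
  frob2 (A - B) = frob2 A - 2 * \tr (A^T *m B) + frob2 B.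
Proof.
rewrite frob2D mulmxN (raddfN (@mxtrace R n)) [frob2 (- B)]frob2_tr (raddfN (@trmx R m n)).
by rewrite mulNmx mulmxN opprK -frob2_tr mulrN.
Qed.

End FrobeniusTrace.

Section SvdTraceBound.
Variables (R : realType) (d p : nat).
Variables (W : 'M[R]_(d, p)) (S V : 'M[R]_p).
Hypotheses (hW : stiefel W) (hV : stiefel V).
Hypotheses (hSdiag : is_diag_mx S) (hSge0 : forall i, 0 <= S i i).

Lemma orthogonal_mulmx_tr : V *m V^T = 1%:M.
Proof. exact: mulmx1C. Qed.

Lemma stiefel_polar : stiefel (W *m V^T).
Proof.
rewrite /stiefel trmx_mul trmxK mulmxA -(mulmxA V) hW mulmx1.
exact: orthogonal_mulmx_tr.
Qed.

Lemma diag_trmx : S^T = S.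
Proof.
move/is_diag_mxP: hSdiag => hS; apply/matrixP => i j; rewrite mxE.
have [/val_inj -> // | ne] := eqVneq (i : nat) j.
by rewrite !hS // eq_sym.
Qed.

Lemma mxtrace_gram_diag_ge0 m (D : 'M[R]_(m, p)) : 0 <= \tr (D^T *m D *m S).
Proof.
move/is_diag_mxP: hSdiag => hS; apply: sumr_ge0 => i _.
rewrite mxE (bigD1 i) //= big1 ?addr0; last first.
  by move=> j ne; rewrite hS ?mulr0 //; apply: contra ne => /eqP/val_inj ->.
apply: mulr_ge0 => //; rewrite mxE; apply: sumr_ge0 => r _.
by rewrite !mxE -expr2 sqr_ge0.
Qed.

Lemma svd_trace_bound (Q : 'M[R]_(d, p)) :
  stiefel Q -> \tr (Q^T *m (W *m S *m V^T)) <= \tr S.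
Proof.
move=> hQ; set P := Q *m V.
have hP : P^T *m P = 1%:M by rewrite /P trmx_mul mulmxA -(mulmxA V^T) hQ mulmx1.
have -> : \tr (Q^T *m (W *m S *m V^T)) = \tr (P^T *m W *m S).
  by rewrite mulmxA mxtrace_mulC /P trmx_mul !mulmxA.
have hsymm : \tr (W^T *m P *m S) = \tr (P^T *m W *m S).
  by rewrite -mxtrace_tr !trmx_mul trmxK diag_trmx mxtrace_mulC.
have := mxtrace_gram_diag_ge0 (P - W).
rewrite (raddfB (@trmx R d p)) mulmxBr !mulmxBl hP hW !raddfB /= !mul1mx hsymm.
lra.
Qed.

Lemma svd_trace_polar : \tr ((W *m V^T)^T *m (W *m S *m V^T)) = \tr S.
Proof.
rewrite trmx_mul trmxK !mulmxA -(mulmxA V) hW mulmx1 mxtrace_mulC mulmxA.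
by rewrite hV mul1mx.
Qed.

End SvdTraceBound.

Lemma polar_trace_max (R : realType) (d p : nat) (M W : 'M[R]_(d, p))
    (S V : 'M[R]_p) (Q : 'M[R]_(d, p)) :
  thin_svd M W S V -> stiefel Q -> \tr (Q^T *m M) <= \tr ((W *m V^T)^T *m M).
Proof.
case=> [[-> hW hV hSdiag hSge0] _] hQ.
by rewrite svd_trace_polar //; exact: svd_trace_bound.
Qed.

Lemma frob2_stiefel_sub (R : realType) (d p : nat) (Q M : 'M[R]_(d, p)) :
  stiefel Q -> frob2 (Q - M) = p%:R - 2 * \tr (Q^T *m M) + frob2 M.
Proof. by move=> hQ; rewrite frob2B frob2_tr hQ mxtrace1. Qed.

Section Majorization.
Variables (R : realType) (d l p k T : nat).
Variables (X : 'I_T -> 'M[R]_(d, l)) (Z : 'I_T -> 'M[R]_(p, k)).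

Lemma loss_cross_term (Xi : 'M[R]_(d, l)) (Zi : 'M[R]_(p, k))
    (Q D : 'M[R]_(d, p)) :
  \tr ((Xi^T *m Q *m Zi)^T *m (Xi^T *m D *m Zi)) =
  \tr (D^T *m (Xi *m Xi^T *m Q *m Zi *m Zi^T)).
Proof.
by rewrite -mxtrace_tr !trmx_mul !trmxK -!mulmxA mxtrace_mulC !mulmxA.
Qed.

(* Concavity of the loss: it lies below its tangent plane at Q', whose
   gradient is -2 Rmat X Z Q'. *)
Lemma lossL_tangent_bound (Q' Q : 'M[R]_(d, p)) :
  lossL X Z Q <= lossL X Z Q' - 2 * \tr ((Q - Q')^T *m Rmat X Z Q').
Proof.
rewrite /lossL /Rmat mulmx_sumr (raddf_sum (@mxtrace R p)).
set D := Q - Q'.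
have hterm i : frob2 ((X i)^T *m Q' *m Z i) +
    2 * \tr (D^T *m (X i *m (X i)^T *m Q' *m Z i *m (Z i)^T))
    <= frob2 ((X i)^T *m Q *m Z i).
  have -> : Q = Q' + D by rewrite /D addrC subrK.
  rewrite mulmxDr mulmxDl frob2D loss_cross_term.
  have := frob2_ge0 ((X i)^T *m D *m Z i); lra.
have hsum : \sum_(i < T) (frob2 ((X i)^T *m Q' *m Z i) +
    2 * \tr (D^T *m (X i *m (X i)^T *m Q' *m Z i *m (Z i)^T)))
    <= \sum_(i < T) frob2 ((X i)^T *m Q *m Z i).
  by apply: ler_sum => i _; exact: hterm.
move: hsum; rewrite big_split /= -mulr_sumr; lra.
Qed.

End Majorization.

Section TrigonometricModel.
Variables (R : realType) (d l k T : nat).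
Variables (X : 'I_T -> 'M[R]_(d, l)) (theta : 'I_k -> R) (t : 'I_T -> R).
Variable Z : 'I_T -> 'M[R]_(k + k, k).
Hypothesis hZ : forall i, Z i = col_mx (cosTheta theta (t i)) (sinTheta theta (t i)).

(* Z_i^T = [cos(Theta t_i) sin(Theta t_i)] since both blocks are diagonal. *)
Lemma trig_block_tr i : (Z i)^T = row_mx (cosTheta theta (t i)) (sinTheta theta (t i)).
Proof. by rewrite hZ tr_col_mx /cosTheta /sinTheta !tr_diag_mx. Qed.

Lemma lossHY_lossL (Q : 'M[R]_(d, k + k)) :
  lossHY X theta t (lsubmx Q) (rsubmx Q) = lossL X Z Q.
Proof.
rewrite /lossHY /lossL; congr (- _); apply: eq_bigr => i _.
by rewrite -mul_row_col hsubmxK hZ mulmxA.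
Qed.

Lemma Rmat_trig (Q' : 'M[R]_(d, k + k)) :
  Rmat X Z Q' =
    \sum_(i < T) row_mx (X i *m ((Q' *m Z i)^T *m X i)^T *m cosTheta theta (t i))
                        (X i *m ((Q' *m Z i)^T *m X i)^T *m sinTheta theta (t i)).
Proof.
apply: eq_bigr => i _.
by rewrite trmx_mul trmxK -mul_mx_row -trig_block_tr !mulmxA.
Qed.

End TrigonometricModel.

Theorem mainTheorem4 (R : realType) (d l k T : nat) (hkd : (k + k <= d)%N)
    (X : 'I_T -> 'M[R]_(d, l)) (Z : 'I_T -> 'M[R]_(k + k, k))
    (Q' : 'M[R]_(d, k + k)) (hQ' : stiefel Q')
    (W : 'M[R]_(d, k + k)) (S V : 'M[R]_(k + k))
    (hsvd : thin_svd (Rmat X Z Q') W S V) :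
  let Qh := W *m V^T in
  [/\ stiefel Qh /\
        (forall Q : 'M[R]_(d, k + k), stiefel Q ->
           frob2 (Qh - Rmat X Z Q') <= frob2 (Q - Rmat X Z Q')),
      lossL X Z Qh <= lossL X Z Q' &
      forall (theta : 'I_k -> R) (t : 'I_T -> R),
        (forall i, Z i = col_mx (cosTheta theta (t i)) (sinTheta theta (t i))) ->
        let G := fun i => (Q' *m Z i)^T *m X i in
        Rmat X Z Q' =
          \sum_(i < T) row_mx (X i *m (G i)^T *m cosTheta theta (t i))
                              (X i *m (G i)^T *m sinTheta theta (t i))
        /\ lossHY X theta t (lsubmx Qh) (rsubmx Qh)
           <= lossHY X theta t (lsubmx Q') (rsubmx Q')].
Proof.
move=> Qh.
have hQh : stiefel Qh by case: hsvd => [[_ hW hV _ _] _]; exact: stiefel_polar.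
have hmax Q : stiefel Q -> \tr (Q^T *m Rmat X Z Q') <= \tr (Qh^T *m Rmat X Z Q').
  by move=> hQ; exact: (polar_trace_max hsvd hQ).
have hloss : lossL X Z Qh <= lossL X Z Q'.
  have := lossL_tangent_bound X Z Q' Qh.
  rewrite (raddfB (@trmx R d (k + k))) mulmxBl (raddfB (@mxtrace R (k + k))).
  have := hmax Q' hQ'; lra.
split=> //.
  split=> // Q hQ; rewrite !frob2_stiefel_sub //.
  have := hmax Q hQ; lra.
move=> theta t hZ G; split; first exact: Rmat_trig.
by rewrite !(lossHY_lossL _ hZ).
Qed.
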